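(* Let $(\mathfrak{h},\langle\cdot,\cdot\rangle)$ be a Kundt pair on the Heisenberg Lie algebra $\mathfrak{n}$. Then it is equivalent to $(\mathfrak{h}_0,\langle\cdot,\cdot\rangle_0)$ where either (1) the matrix of $\langle\cdot,\cdot\rangle_0$ in the basis $(X_1,X_2,X_3)$ is $\begin{pmatrix}1&0&0\\0&-1&0\\0&0&\mu\end{pmatrix}$ with $\mu>0$, and $\mathfrak{h}_0=\mathrm{span}\{X_1+X_2,X_3\}$ or $\mathfrak{h}_0=\mathrm{span}\{X_1-X_2,X_3\}$; or (2) the matrix of $\langle\cdot,\cdot\rangle_0$ in the basis $(X_1,X_2,X_3)$ is $\begin{pmatrix}1&0&0\\0&0&1\\0&1&0\end{pmatrix}$ and $\mathfrak{h}_0=\mathrm{span}\{X_1,X_3\}$.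
   Context: $\mathfrak{n}$ has basis $(X_1,X_2,X_3)$ with only nonzero bracket $[X_1,X_2]=X_3$. For a Lorentzian scalar product $\langle\cdot,\cdot\rangle$ on a Lie algebra $\mathfrak{g}$, the Levi-Civita product is defined by $2\langle u\bullet v,w\rangle=\langle[u,v],w\rangle+\langle[w,u],v\rangle+\langle[w,v],u\rangle$. A Kundt pair on $\mathfrak{g}$ is a pair consisting of a Lorentzian scalar product $\langle\cdot,\cdot\rangle$ and a codimension one subalgebra $\mathfrak{h}$ which is $\langle\cdot,\cdot\rangle$-degenerate, stable by $\bullet$, and such that $e\bullet e=0$ for all $e\in\mathfrak{h}^\perp$. Two Kundt pairs $(\mathfrak{h}_1,\langle\cdot,\cdot\rangle_1)$, $(\mathfrak{h}_2,\langle\cdot,\cdot\rangle_2)$ are equivalent if there is a Lie algebra automorphism $\phi$ of $\mathfrak{g}$ with $\phi(\mathfrak{h}_1)=\mathfrak{h}_2$ and $\phi^*\langle\cdot,\cdot\rangle_2=\langle\cdot,\cdot\rangle_1$. *)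

(* The Heisenberg Lie algebra n = R^3 (R : realType, i.e. the reals),
   vectors are row vectors 'rV[R]_3 written in the basis (X1,X2,X3);
   scalar products are Gram matrices G : 'M[R]_3, <x,y> = x G y^T. *)
From HB Require Import structures.
From mathcomp Require Import all_boot all_order all_algebra.
From mathcomp Require Import reals.
Set Implicit Arguments. Unset Strict Implicit. Unset Printing Implicit Defensive.
Import Order.TTheory GRing.Theory Num.Theory.
Local Open Scope ring_scope.

Section Heis.
Variable R : realType.

Definition rv3 (a b c : R) : 'rV[R]_3 := \row_(j < 3) nth 0 [:: a; b; c] j.

Definition mx3 (r0 r1 r2 : seq R) : 'M[R]_3 :=
  \matrix_(i < 3, j < 3) nth 0 (nth [::] [:: r0; r1; r2] i) j.

Definition X1 : 'rV[R]_3 := rv3 1 0 0.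
Definition X2 : 'rV[R]_3 := rv3 0 1 0.
Definition X3 : 'rV[R]_3 := rv3 0 0 1.

(* Heisenberg bracket: only nonzero bracket [X1,X2] = X3 *)
Definition hbr (u v : 'rV[R]_3) : 'rV[R]_3 :=
  rv3 0 0 (u 0 0 * v 0 1 - u 0 1 * v 0 0).

Definition form (G : 'M[R]_3) (x y : 'rV[R]_3) : R := (x *m G *m y^T) 0 0.

Definition lorentzian (G : 'M[R]_3) : Prop :=
  G^T = G /\ exists P : 'M[R]_3, P \in unitmx /\ P *m G *m P^T = mx3 [:: 1; 0; 0] [:: 0; 1; 0] [:: 0; 0; -1].

Definition ebas (k : 'I_3) : 'rV[R]_3 := delta_mx 0 k.

(* Levi-Civita product u . v, the unique vector with
   2<u.v,w> = <[u,v],w> + <[w,u],v> + <[w,v],u>  for all w (G nondegenerate). *)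
Definition lcprod (G : 'M[R]_3) (u v : 'rV[R]_3) : 'rV[R]_3 :=
  (\row_(k < 3) (2^-1 * (form G (hbr u v) (ebas k) + form G (hbr (ebas k) u) v
                          + form G (hbr (ebas k) v) u))) *m invmx G.

(* subspaces of n are row spaces of matrices (mxalgebra) *)
Definition subalgebra (h : 'M[R]_3) : Prop :=
  forall u v : 'rV[R]_3, (u <= h)%MS -> (v <= h)%MS -> (hbr u v <= h)%MS.

Definition degenerate_on (G : 'M[R]_3) (h : 'M[R]_3) : Prop :=
  exists u : 'rV[R]_3, [/\ (u <= h)%MS, u != 0 &
     forall w : 'rV[R]_3, (w <= h)%MS -> form G u w = 0].

Definition in_orth (G : 'M[R]_3) (h : 'M[R]_3) (e : 'rV[R]_3) : Prop :=
  forall w : 'rV[R]_3, (w <= h)%MS -> form G e w = 0.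

Definition kundt_pair (h G : 'M[R]_3) : Prop :=
  [/\ lorentzian G,
      \rank h = 2%N /\ subalgebra h,
      degenerate_on G h,
      (forall u v, (u <= h)%MS -> (v <= h)%MS -> (lcprod G u v <= h)%MS)
    & (forall e, in_orth G h e -> lcprod G e e = 0)].

(* Lie algebra automorphisms of n, acting on row vectors by u |-> u *m A *)
Definition lie_aut (A : 'M[R]_3) : Prop :=
  A \in unitmx /\ forall u v : 'rV[R]_3, hbr (u *m A) (v *m A) = hbr u v *m A.

Definition kundt_equiv m1 m2 (h1 : 'M[R]_(m1, 3)) (G1 : 'M[R]_3)
    (h2 : 'M[R]_(m2, 3)) (G2 : 'M[R]_3) : Prop :=
  exists A : 'M[R]_3, [/\ lie_aut A, (h1 *m A == h2)%MS & A *m G2 *m A^T = G1].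

End Heis.

From Pilot Require Import Defs.
From HB Require Import structures.
From mathcomp Require Import all_boot all_order all_algebra.
From mathcomp Require Import reals ring lra.
Import Order.TTheory GRing.Theory Num.Theory.
Local Open Scope ring_scope.
Set Implicit Arguments. Unset Strict Implicit. Unset Printing Implicit Defensive.

(* A degenerate plane h is the orthogonal u^perp of a null vector u, and for
   e = u the Kundt condition u . u = 0 reads <X3, u> u_1 = <X3, u> u_2 = 0.
   If u is central, X3 is null and h = X3^perp: completing X3 to a Witt basis
   gives normal form (2).  Otherwise X3 lies in h, and completing u to a
   hyperbolic pair (u, w) orthogonal to X3 yields an orthonormal pair Y1, Y2
   with Y1 + Y2 = 2u; X3 is then spacelike, giving normal form (1) with
   X1 + X2.  In both cases the equivalence is the automorphism
   X1 |-> Y1, X2 |-> Y2, X3 |-> [Y1, Y2], the pair being rescaled in case (2)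
   so that [Y1, Y2] is the right multiple of X3. *)

Local Notation form := Defs.form.

Section Heisenberg.
Variable R : realType.
Local Notation X1 := (X1 R).
Local Notation X2 := (X2 R).
Local Notation X3 := (X3 R).
Implicit Types (h G F : 'M[R]_3) (a b c n u v w x y z : 'rV[R]_3).

Lemma sum3 (f : 'I_3 -> R) : \sum_(i < 3) f i = f 0 + f 1 + f 2.
Proof.
rewrite !big_ord_recl big_ord0 addr0 addrA; congr (f _ + f _ + f _); exact/val_inj.
Qed.

Lemma ord3P (i : 'I_3) : [\/ i = 0, i = 1 | i = 2].
Proof.
by case: i => [[|[|[|//]]] ?]; [constructor 1|constructor 2|constructor 3]; apply/val_inj.
Qed.

Lemma rv3_0 (p q r : R) : rv3 p q r 0 0 = p. Proof. by rewrite mxE. Qed.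
Lemma rv3_1 (p q r : R) : rv3 p q r 0 1 = q. Proof. by rewrite mxE. Qed.
Lemma rv3_2 (p q r : R) : rv3 p q r 0 2 = r. Proof. by rewrite mxE. Qed.
Definition rv3E := (rv3_0, rv3_1, rv3_2).

Lemma rowP3 x y : x 0 0 = y 0 0 -> x 0 1 = y 0 1 -> x 0 2 = y 0 2 -> x = y.
Proof. by move=> e0 e1 e2; apply/rowP => j; case: (ord3P j) => ->. Qed.

Lemma entryD x y j : (x + y) 0 j = x 0 j + y 0 j. Proof. by rewrite mxE. Qed.
Lemma entryZ (k : R) x j : (k *: x) 0 j = k * x 0 j. Proof. by rewrite mxE. Qed.
Definition entryE := (entryD, entryZ).

Lemma mulrv3E x F j : (x *m F) 0 j = x 0 0 * F 0 j + x 0 1 * F 1 j + x 0 2 * F 2 j.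
Proof. by rewrite mxE sum3. Qed.

Lemma det3 F : \det F =
  F 0 0 * (F 1 1 * F 2 2 - F 1 2 * F 2 1)
  - F 0 1 * (F 1 0 * F 2 2 - F 1 2 * F 2 0)
  + F 0 2 * (F 1 0 * F 2 1 - F 1 1 * F 2 0).
Proof.
rewrite (expand_det_row _ ord0) !big_ord_recr big_ord0 /= /cofactor.
rewrite !(expand_det_row _ ord0) !big_ord_recr big_ord0 /= /cofactor.
rewrite !det_mx11 !big_ord0 !mxE /=.
(* Identify the entries whose ordinals differ only by their proof terms. *)
pose f (i j : nat) := F (inord i) (inord j).
have Fe (i j : 'I_3) : F i j = f i j by rewrite /f !inord_val.
by rewrite !Fe /=; ring.
Qed.

Lemma det_mx3 (p q r s t k l m o : R) :
  \det (mx3 [:: p; q; r] [:: s; t; k] [:: l; m; o]) =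
  p * (t * o - k * m) - q * (s * o - k * l) + r * (s * m - t * l).
Proof. by rewrite det3 !mxE. Qed.

Definition rows3 a b c : 'M[R]_3 := \matrix_(i < 3, j < 3) (nth 0 [:: a; b; c] i) 0 j.

Lemma row_rows3 a b c :
  [/\ row 0 (rows3 a b c) = a, row 1 (rows3 a b c) = b & row 2 (rows3 a b c) = c].
Proof. by split; apply/rowP => j; rewrite !mxE. Qed.

Lemma mul_rows3 x a b c : x *m rows3 a b c = x 0 0 *: a + x 0 1 *: b + x 0 2 *: c.
Proof. by apply/rowP => j; rewrite mulrv3E !mxE. Qed.

Definition det12 a b := a 0 0 * b 0 1 - a 0 1 * b 0 0.

Lemma det_rows3_X3 a b : \det (rows3 a b X3) = det12 a b.
Proof. by rewrite det3 !mxE /=; rewrite /det12; ring. Qed.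

Lemma formDl G x y z : form G (x + y) z = form G x z + form G y z.
Proof. by rewrite /form !mulmxDl mxE. Qed.
Lemma formDr G x y z : form G z (x + y) = form G z x + form G z y.
Proof. by rewrite /form linearD /= mulmxDr mxE. Qed.
Lemma formZl G (k : R) x z : form G (k *: x) z = k * form G x z.
Proof. by rewrite /form -!scalemxAl mxE. Qed.
Lemma formZr G (k : R) x z : form G z (k *: x) = k * form G z x.
Proof. by rewrite /form linearZ /= -scalemxAr mxE. Qed.
Lemma formNl G x z : form G (- x) z = - form G x z.
Proof. by rewrite -scaleN1r formZl mulN1r. Qed.
Lemma formNr G x z : form G z (- x) = - form G z x.
Proof. by rewrite -scaleN1r formZr mulN1r. Qed.
Definition formE := (formDl, formDr, formZl, formZr, formNl, formNr).

Lemma formC G x y : G^T = G -> form G x y = form G y x.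
Proof.
move=> sG; rewrite /form.
have -> : y *m G *m x^T = (x *m G *m y^T)^T by rewrite !trmx_mul trmxK sG mulmxA.
by rewrite [in RHS]mxE.
Qed.

Lemma form_invmx G z x : G \in unitmx ->
  form G (z *m invmx G) x = z 0 0 * x 0 0 + z 0 1 * x 0 1 + z 0 2 * x 0 2.
Proof. by move=> uG; rewrite /form mulmxKV // mxE sum3 !mxE. Qed.

Lemma gram_rows3 G a b c :
  rows3 a b c *m G *m (rows3 a b c)^T =
  mx3 [:: form G a a; form G a b; form G a c]
      [:: form G b a; form G b b; form G b c]
      [:: form G c a; form G c b; form G c c].
Proof.
have gramE i j : (rows3 a b c *m G *m (rows3 a b c)^T) i j
                 = form G (row i (rows3 a b c)) (row j (rows3 a b c)).
  rewrite /form !mxE; apply: eq_bigr => k _; rewrite !mxE; congr (_ * _).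
  by apply: eq_bigr => l _; rewrite !mxE.
have [r0 r1 r2] := row_rows3 a b c.
apply/matrixP => i j; rewrite gramE.
case: (ord3P i) => ->; case: (ord3P j) => ->; rewrite ?r0 ?r1 ?r2 !mxE //.
Qed.

Lemma det_gram F G : \det (F *m G *m F^T) = \det F ^+ 2 * \det G.
Proof. by rewrite !det_mulmx det_tr; ring. Qed.

Lemma hbrE x y : hbr x y = det12 x y *: X3.
Proof. by apply: rowP3; rewrite !mxE /= ?mulr0 ?mulr1. Qed.

Lemma X3_neq0 : X3 != 0.
Proof. by apply/negP => /eqP/rowP/(_ 2); rewrite !mxE /= => /eqP; rewrite oner_eq0. Qed.

(* The automorphism sending X1, X2 to a, b, hence X3 to [a, b] = det12 a b X3. *)
Definition heis_frame a b := rows3 a b (det12 a b *: X3).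

Lemma heis_frame_rows a b :
  [/\ X1 *m heis_frame a b = a, X2 *m heis_frame a b = b
    & X3 *m heis_frame a b = det12 a b *: X3].
Proof.
by split; rewrite mul_rows3 !rv3E ?scale0r ?scale1r ?addr0 ?add0r.
Qed.

Lemma det_heis_frame a b : \det (heis_frame a b) = det12 a b ^+ 2.
Proof. by rewrite det3 !mxE /=; rewrite /det12; ring. Qed.

Lemma det12_mul_heis_frame a b x y :
  det12 (x *m heis_frame a b) (y *m heis_frame a b) = det12 x y * det12 a b.
Proof. by rewrite !mul_rows3 /det12 !entryE !rv3E; ring. Qed.

Lemma gram_heis_frame G a b : G^T = G ->
  let d := det12 a b in
  heis_frame a b *m G *m (heis_frame a b)^T =
  mx3 [:: form G a a; form G a b; d * form G a X3]
      [:: form G a b; form G b b; d * form G b X3]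
      [:: d * form G a X3; d * form G b X3; d ^+ 2 * form G X3 X3].
Proof.
move=> sG d; rewrite gram_rows3 !formE [form G b a]formC // ![form G X3 _]formC //.
by rewrite mulrA -expr2.
Qed.

Lemma lie_aut_heis_frame a b : det12 a b != 0 -> lie_aut (heis_frame a b).
Proof.
move=> d_neq0; split; first by rewrite unitmxE unitfE det_heis_frame expf_neq0.
move=> x y; have [_ _ fX3] := heis_frame_rows a b.
by rewrite !hbrE det12_mul_heis_frame -scalemxAl fX3 scalerA.
Qed.

Lemma lie_aut_invmx F : lie_aut F -> lie_aut (invmx F).
Proof.
case=> uF autF; split; first by rewrite unitmx_inv.
move=> x y; have := autF (x *m invmx F) (y *m invmx F).
by rewrite !mulmxKV // => ->; rewrite mulmxK.
Qed.

Lemma kundt_equiv_of_frame m0 h G (h0 : 'M[R]_(m0, 3)) G0 a b :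
  det12 a b != 0 -> \rank h0 = 2%N -> \rank h = 2%N ->
  (h0 *m heis_frame a b <= h)%MS ->
  heis_frame a b *m G *m (heis_frame a b)^T = G0 ->
  kundt_equiv h G h0 G0.
Proof.
move=> d_neq0 rh0 rh sub gram; set F := heis_frame a b in sub gram.
have autF := lie_aut_heis_frame d_neq0; have [uF _] := autF.
exists (invmx F); split; first exact: lie_aut_invmx.
- have /eqmxP eqh : (h0 *m F == h)%MS.
    by rewrite -(mxrank_leqif_eq sub) mxrankMfree ?row_free_unit // rh0 rh.
  by apply/eqmxP/eqmx_sym; have := eqmxMr (invmx F) eqh; rewrite mulmxK.
- by rewrite -gram !mulmxA mulVmx // mul1mx -mulmxA -trmx_mul mulVmx // trmx1 mulmx1.
Qed.

Lemma mxrank_col_mx_X3 a : a 0 0 = 1 -> a 0 2 = 0 -> \rank (col_mx a X3) = 2%N.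
Proof.
move=> a0 a2; apply/eqP; rewrite eqn_leq rank_leq_row /=.
apply: leq_trans (mxrankM_maxl _ (row_mx X1^T X3^T)).
have dot11 x y : x *m y^T = (x 0 0 * y 0 0 + x 0 1 * y 0 1 + x 0 2 * y 0 2)%:M.
  by apply/rowP => j; rewrite (ord1 j) !mxE sum3 !mxE.
rewrite mul_col_row !dot11 !rv3E a0 a2 /=.
by rewrite !(mulr0, mulr1, addr0, add0r) raddf0 -scalar_mx_block mxrank1.
Qed.

Lemma lorentzianP G : lorentzian G -> [/\ G^T = G, G \in unitmx & \det G < 0].
Proof.
case=> sG [P [_ PGP]].
have detPG : \det P ^+ 2 * \det G = -1 by rewrite -det_gram PGP det_mx3; ring.
have dG : \det G < 0 by have := sqr_ge0 (\det P); nra.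
by split; rewrite // unitmxE unitfE ltr0_neq0.
Qed.

Lemma orth_sub_hyperplane h G u : G^T = G -> G \in unitmx -> \rank h = 2%N ->
  u != 0 -> (forall w, (w <= h)%MS -> form G u w = 0) ->
  forall w, form G u w = 0 -> (w <= h)%MS.
Proof.
move=> sG uG rh u_neq0 u_rad.
pose c := G *m u^T.
have formc w : (w *m c == 0) = (form G u w == 0).
  rewrite formC // /form /c mulmxA; apply/eqP/eqP => [->|w0]; first by rewrite mxE.
  by apply/rowP => j; rewrite (ord1 j) w0 mxE.
have c_neq0 : c != 0.
  by apply: contraNneq u_neq0 => c0; rewrite -trmx_eq0 -(mulKmx uG u^T) -/c c0 mulmx0.
have rc : \rank c = 1%N.
  by apply/eqP; rewrite eqn_leq rank_leq_col lt0n mxrank_eq0.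
have h_ker : (h <= kermx c)%MS.
  apply/sub_kermxP/row_matrixP => i; rewrite row_mul row0.
  by apply/eqP; rewrite formc u_rad ?row_sub.
have ker_h : (kermx c <= h)%MS by rewrite -(mxrank_leqif_sup h_ker).2 rh mxrank_ker rc.
by move=> w /eqP uw; apply: submx_trans ker_h; apply/sub_kermxP/eqP; rewrite formc uw.
Qed.

(* As [u, u] = 0, the k-th coordinate of (u . u) G is <[e_k, u], u>. *)
Lemma lcprod_self_eq0 G u : G \in unitmx -> lcprod G u u = 0 ->
  u 0 0 ^+ 2 + u 0 1 ^+ 2 != 0 -> form G X3 u = 0.
Proof.
move=> uG; rewrite /lcprod => /(congr1 (mulmx^~ G)); rewrite mulmxKV // mul0mx.
move=> /rowP lc u_noncentral; have := lc 0; have := lc 1; rewrite !mxE /= !hbrE.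
have -> : det12 u u = 0 by rewrite /det12 mulrC subrr.
rewrite !formZl /det12 !mxE /= => lc1 lc0.
set f := form G X3 u in lc1 lc0 *.
have u0f : u 0 0 * f = 0 by lra.
have u1f : u 0 1 * f = 0 by lra.
have : (u 0 0 ^+ 2 + u 0 1 ^+ 2) * f = 0.
  by rewrite mulrDl !expr2 -!mulrA u0f u1f !mulr0 addr0.
by move/eqP; rewrite mulf_eq0 (negbTE u_noncentral) => /eqP.
Qed.

Lemma det_rows3_orth_neq0 G a b c : G^T = G -> c != 0 ->
  form G a c = 0 -> form G b c = 0 ->
  form G a a * form G b b - form G a b ^+ 2 != 0 -> \det (rows3 a b c) != 0.
Proof.
move=> sG c_neq0 ac bc gram_neq0; apply/det0P => -[x x_neq0]; rewrite mul_rows3 => comb.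
have pair y : x 0 0 * form G a y + x 0 1 * form G b y + x 0 2 * form G c y = 0.
  by rewrite -!formZl -!formDl comb /form !mul0mx mxE.
have := pair a; have := pair b; rewrite [form G b a]formC // ![form G c _]formC // ac bc.
move=> eb ea; move: gram_neq0.
set aa := form G a a; set bb := form G b b; set ab := form G a b => gram_neq0.
have x0 : x 0 0 = 0.
  have : x 0 0 * (aa * bb - ab ^+ 2) = 0.
    have -> : x 0 0 * (aa * bb - ab ^+ 2)
              = bb * (x 0 0 * aa + x 0 1 * ab + x 0 2 * 0)
                - ab * (x 0 0 * ab + x 0 1 * bb + x 0 2 * 0) by ring.
    by rewrite ea eb !mulr0 subrr.
  by move/eqP; rewrite mulf_eq0 (negbTE gram_neq0) orbF => /eqP.
have x1 : x 0 1 = 0.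
  have : x 0 1 * (aa * bb - ab ^+ 2) = 0.
    have -> : x 0 1 * (aa * bb - ab ^+ 2)
              = aa * (x 0 0 * ab + x 0 1 * bb + x 0 2 * 0)
                - ab * (x 0 0 * aa + x 0 1 * ab + x 0 2 * 0) by ring.
    by rewrite ea eb !mulr0 subrr.
  by move/eqP; rewrite mulf_eq0 (negbTE gram_neq0) orbF => /eqP.
move: comb; rewrite x0 x1 !scale0r !add0r => /eqP; rewrite scaler_eq0 (negbTE c_neq0) orbF.
by move=> /eqP x2; move/eqP: x_neq0; apply; apply: rowP3; rewrite ?x0 ?x1 ?x2 mxE.
Qed.

Lemma orth_lorentz_plane_spacelike G a b c : G^T = G -> \det G < 0 -> c != 0 ->
  form G a c = 0 -> form G b c = 0 ->
  form G a a * form G b b - form G a b ^+ 2 < 0 -> 0 < form G c c.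
Proof.
move=> sG dG c_neq0 ac bc gram_lt0.
have dM := det_rows3_orth_neq0 sG c_neq0 ac bc (ltr0_neq0 gram_lt0).
have := det_gram (rows3 a b c) G.
rewrite gram_rows3 det_mx3 [form G b a]formC // [form G c a]formC //.
rewrite [form G c b]formC // ac bc => E.
have : 0 < \det (rows3 a b c) ^+ 2 by rewrite exprn_even_gt0.
nra.
Qed.

Lemma hyperbolic_pair_orthonormal G u w c : G^T = G ->
  form G u u = 0 -> form G u w = 1 -> form G u c = 0 -> form G w c = 0 ->
  exists Y1 Y2, [/\ Y1 + Y2 = u *+ 2, form G Y1 Y1 = 1, form G Y2 Y2 = -1,
                    form G Y1 Y2 = 0 & form G Y1 c = 0 /\ form G Y2 c = 0].
Proof.
move=> sG uu uw uc wc; pose m := 2^-1 *: w - (form G w w / 4) *: u.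
have wu : form G w u = 1 by rewrite formC.
exists (u + m), (u - m); split; rewrite /m ?formE ?uu ?uw ?wu ?uc ?wc.
- by rewrite addrACA subrr addr0.
- by field.
- by field.
- by field.
- by split; ring.
Qed.

Lemma kundt_equiv_spacelike_center h G u :
  G^T = G -> G \in unitmx -> \det G < 0 -> \rank h = 2%N ->
  (forall w, form G u w = 0 -> (w <= h)%MS) ->
  form G u u = 0 -> form G X3 u = 0 -> u 0 0 ^+ 2 + u 0 1 ^+ 2 != 0 ->
  exists2 mu : R, 0 < mu &
    kundt_equiv h G (col_mx (X1 + X2) X3) (mx3 [:: 1; 0; 0] [:: 0; -1; 0] [:: 0; 0; mu]).
Proof.
move=> sG uG dG rh orth_h uu X3u u_noncentral; set s := _ + _ in u_noncentral.
pose w := rv3 (u 0 0 / s) (u 0 1 / s) 0 *m invmx G.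
have uw : form G u w = 1 by rewrite formC // form_invmx // !rv3E /s; field.
have u3 : form G u X3 = 0 by rewrite formC.
have w3 : form G w X3 = 0 by rewrite form_invmx // /Defs.X3 !rv3E; ring.
have [Y1 [Y2 [sumY Y11 Y22 Y12 [Y13 Y23]]]] := hyperbolic_pair_orthonormal sG uu uw u3 w3.
have q3_gt0 : 0 < form G X3 X3.
  by apply: (orth_lorentz_plane_spacelike sG dG X3_neq0 Y13 Y23); rewrite Y11 Y22 Y12; lra.
have d_neq0 : det12 Y1 Y2 != 0.
  have := det_rows3_orth_neq0 sG X3_neq0 Y13 Y23; rewrite det_rows3_X3 Y11 Y22 Y12.
  by apply; rewrite mul1r expr0n subr0 oppr_eq0 oner_eq0.
exists (det12 Y1 Y2 ^+ 2 * form G X3 X3); first by rewrite mulr_gt0 // exprn_even_gt0.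
have [fX1 fX2 fX3] := heis_frame_rows Y1 Y2.
apply: kundt_equiv_of_frame d_neq0 _ rh _ _.
- by apply: mxrank_col_mx_X3; rewrite entryD /Defs.X1 /Defs.X2 !rv3E; lra.
- rewrite mul_col_mx mulmxDl fX1 fX2 fX3 sumY col_mx_sub.
  by apply/andP; split; apply: orth_h; rewrite -?scaler_nat formZr ?uu ?u3 mulr0.
- by rewrite gram_heis_frame // Y11 Y22 Y12 Y13 Y23 !mulr0.
Qed.

Lemma null_center_frame G : G^T = G -> G \in unitmx -> \det G < 0 -> form G X3 X3 = 0 ->
  exists a n, [/\ form G a a = 1, form G a n = 0, form G n n = 0,
                  form G a X3 = 0 & form G n X3 = 1].
Proof.
move=> sG uG dG q3.
pose w := X3 *m invmx G.
have w3 : form G w X3 = 1 by rewrite form_invmx // /Defs.X3 !rv3E; ring.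
have X3w : form G X3 w = 1 by rewrite formC.
pose y := rv3 (w 0 1) (- w 0 0) 0; pose v := y *m invmx G.
have v3 : form G v X3 = 0 by rewrite form_invmx // /y /Defs.X3 !rv3E; ring.
have vw : form G v w = 0 by rewrite form_invmx // /y !rv3E; ring.
have v_neq0 : v != 0.
  apply: contra_neq (oner_neq0 R) => v0; rewrite -w3.
  have y0 : y = 0 by rewrite -[y](mulmxKV uG) -/v v0 mul0mx.
  have w1 : w 0 1 = 0 by rewrite -(rv3_0 (w 0 1) (- w 0 0) 0) -/y y0 mxE.
  have w0 : w 0 0 = 0.
    by apply/eqP; rewrite -oppr_eq0 -(rv3_1 (w 0 1) (- w 0 0) 0) -/y y0 mxE.
  have -> : w = w 0 2 *: X3.
    by apply: rowP3; rewrite entryZ /Defs.X3 !rv3E ?w0 ?w1 ?mulr0 ?mulr1.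
  by rewrite formZl q3 mulr0.
have qv_gt0 : 0 < form G v v.
  apply: (@orth_lorentz_plane_spacelike G X3 w v sG dG v_neq0).
  - by rewrite formC.
  - by rewrite formC.
  - by rewrite q3 X3w; lra.
pose r := Num.sqrt (form G v v).
have r2 : r ^+ 2 = form G v v by rewrite sqr_sqrtr // ltW.
have r_neq0 : r != 0 by rewrite gt_eqF // sqrtr_gt0.
exists (r^-1 *: v), (w - (form G w w / 2) *: X3).
split; rewrite !formE ?[form G X3 w]formC // ?v3 ?vw ?w3 ?q3.
- by rewrite -r2; field.
- by ring.
- by field.
- by ring.
- by ring.
Qed.

Lemma kundt_equiv_null_center h G :
  G^T = G -> G \in unitmx -> \det G < 0 -> \rank h = 2%N ->
  form G X3 X3 = 0 -> (forall w, form G X3 w = 0 -> (w <= h)%MS) ->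
  kundt_equiv h G (col_mx X1 X3) (mx3 [:: 1; 0; 0] [:: 0; 0; 1] [:: 0; 1; 0]).
Proof.
move=> sG uG dG rh q3 orth_h.
have [a [n [aa an nn a3 n3]]] := null_center_frame sG uG dG q3.
have d_neq0 : det12 a n != 0.
  have := det_gram (rows3 a n X3) G.
  rewrite gram_rows3 det_mx3 [form G n a]formC // [form G X3 a]formC //.
  rewrite [form G X3 n]formC // aa an nn a3 n3 q3 det_rows3_X3 => E.
  by apply/eqP => d0; move: E; rewrite d0 expr0n /= mul0r; lra.
pose e := Num.sg (det12 a n); pose t := Num.sqrt `|det12 a n|.
have t_neq0 : t != 0 by rewrite gt_eqF // sqrtr_gt0 normr_gt0.
have e2 : e ^+ 2 = 1 by rewrite sqr_sg d_neq0.
have d_t : det12 (e *: a) (t^-1 *: n) = t.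
  have -> : det12 (e *: a) (t^-1 *: n) = t^-1 * (e * det12 a n).
    by rewrite /det12 !entryZ; ring.
  by rewrite /e -normrEsg -[`|_|]sqr_sqrtr // expr2 mulKf.
have [fX1 _ fX3] := heis_frame_rows (e *: a) (t^-1 *: n).
apply: (kundt_equiv_of_frame (a := e *: a) (b := t^-1 *: n)) _ _ rh _ _.
- by rewrite d_t.
- by apply: mxrank_col_mx_X3; rewrite /Defs.X1 !rv3E.
- rewrite mul_col_mx fX1 fX3 col_mx_sub.
  by apply/andP; split; apply: orth_h; rewrite formZr ?[form G X3 a]formC // ?a3 ?q3 mulr0.
- rewrite gram_heis_frame // d_t !formE aa an nn a3 n3 q3.
  by rewrite mulrA -expr2 e2 !mulr0 !mulr1 mulfV.
Qed.

End Heisenberg.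

Theorem theorem5p3 (R : realType) (h G : 'M[R]_3) :
  kundt_pair h G ->
  (exists mu : R, 0 < mu /\
     (kundt_equiv h G (col_mx (X1 R + X2 R) (X3 R))
                      (mx3 [:: 1; 0; 0] [:: 0; -1; 0] [:: 0; 0; mu])
      \/ kundt_equiv h G (col_mx (X1 R - X2 R) (X3 R))
                      (mx3 [:: 1; 0; 0] [:: 0; -1; 0] [:: 0; 0; mu])))
  \/ kundt_equiv h G (col_mx (X1 R) (X3 R))
                     (mx3 [:: 1; 0; 0] [:: 0; 0; 1] [:: 0; 1; 0]).
Proof.
case=> /lorentzianP[sG uG dG] [rh _] [u [uh u_neq0 u_rad]] _ lc_null.
have orth_h := orth_sub_hyperplane sG uG rh u_neq0 u_rad.
have uu : form G u u = 0 := u_rad u uh.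
case: (eqVneq (u 0 0 ^+ 2 + u 0 1 ^+ 2) 0) => [u_central | u_noncentral].
- right; have [u0 u1] : u 0 0 = 0 /\ u 0 1 = 0 by split; nra.
  have uE : u = u 0 2 *: X3 R.
    by apply: rowP3; rewrite entryZ /X3 !rv3E ?u0 ?u1 ?mulr0 ?mulr1.
  have c_neq0 : u 0 2 != 0 by apply: contraNneq u_neq0 => c0; rewrite uE c0 scale0r.
  have q3 : form G (X3 R) (X3 R) = 0.
    move: uu; rewrite {1 2}uE formZl formZr => /eqP.
    by rewrite !mulf_eq0 (negbTE c_neq0) => /eqP.
  apply: kundt_equiv_null_center => // w X3w.
  by apply: orth_h; rewrite uE formZl X3w mulr0.
- left; have X3u := lcprod_self_eq0 uG (lc_null u u_rad) u_noncentral.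
  have [mu mu_gt0 equiv] := kundt_equiv_spacelike_center sG uG dG rh orth_h uu X3u u_noncentral.
  by exists mu; split => //; left.
Qed.
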